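(* Let $t>0$ be fixed and $x_1>0$. Then the characteristic triangles $\Delta(0,t)$ and $\Delta(x_1,t)$ do not intersect in the open quadrant $(0,\infty)^2$.
   Context: Standing assumptions: $u_0,u_b:[0,\infty)\to\mathbb{R}$ bounded measurable with $u_b>0$; $\rho_0,\rho_b:[0,\infty)\to(0,\infty)$ positive locally bounded measurable. For $x,t,y,\tau\ge0$: $F(y,x,t)=\int_0^y[tu_0(\eta)+\eta-x]\rho_0(\eta)\,d\eta$, $G(\tau,x,t)=\int_0^\tau[x-u_b(\eta)(t-\eta)]\rho_b(\eta)u_b(\eta)\,d\eta$, $F(x,t)=\min_{y\ge0}F(y,x,t)$, $G(x,t)=\min_{\tau\ge0}G(\tau,x,t)$ (minima attained); $y_*\le y^*$ smallest/largest minimizers of $F(\cdot,x,t)$, $\tau_*\le\tau^*$ those of $G(\cdot,x,t)$. Characteristic triangle $\Delta(x,t)$ ($x\ge0,t>0$): (1) if $x>0$, $F(x,t)<G(x,t)$: convex hull of $(x,t),(y_*(x,t),0),(y^*(x,t),0)$; (2) if $F(x,t)>G(x,t)$: convex hull of $(x,t),(0,\tau_*(x,t)),(0,\tau^*(x,t))$; (3) if $F(x,t)=G(x,t)$: convex hull of $(x,t),(y^*(x,t),0),(0,\tau^*(x,t)),(0,0)$; (4) if $x=0$, $F(0,t)<G(0,t)$: convex hull of $(0,t),(0,0),(y^*(0,t),0)$. *)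

From HB Require Import structures.
From mathcomp Require Import all_boot all_order all_algebra.
From mathcomp Require Import all_classical all_reals all_analysis.
Set Implicit Arguments. Unset Strict Implicit. Unset Printing Implicit Defensive.
Import Order.TTheory GRing.Theory Num.Theory.
Local Open Scope classical_set_scope.
Local Open Scope ring_scope.

Definition nonneg_half (R : realType) : set R := [set x : R | 0 <= x].

(* Standing assumptions on the data u0, ub, rho0, rhob (only their values on
   [0, oo) matter). *)
Definition bounded_on_halfline (R : realType) (f : R -> R) : Prop :=
  exists M : R, forall x : R, 0 <= x -> `|f x| <= M.

Definition locally_bounded_on_halfline (R : realType) (f : R -> R) : Prop :=
  forall a : R, 0 <= a -> exists M : R, forall x : R, 0 <= x <= a -> `|f x| <= M.

Definition standing_assumptions (R : realType) (u0 ub rho0 rhob : R -> R) : Prop :=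
  [/\ measurable_fun (@nonneg_half R) u0 /\ bounded_on_halfline u0,
      measurable_fun (@nonneg_half R) ub /\ bounded_on_halfline ub
        /\ (forall x : R, 0 <= x -> 0 < ub x),
      measurable_fun (@nonneg_half R) rho0 /\ locally_bounded_on_halfline rho0
        /\ (forall x : R, 0 <= x -> 0 < rho0 x) &
      measurable_fun (@nonneg_half R) rhob /\ locally_bounded_on_halfline rhob
        /\ (forall x : R, 0 <= x -> 0 < rhob x)].

Definition Fyxt (R : realType) (u0 rho0 : R -> R) (y x t : R) : R :=
  Rintegral (@lebesgue_measure R) `[0, y]
    (fun eta => (t * u0 eta + eta - x) * rho0 eta).

Definition Gtxt (R : realType) (ub rhob : R -> R) (tau x t : R) : R :=
  Rintegral (@lebesgue_measure R) `[0, tau]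
    (fun eta => (x - ub eta * (t - eta)) * rhob eta * ub eta).

Definition Fmin (R : realType) (u0 rho0 : R -> R) (x t : R) : R :=
  inf [set Fyxt u0 rho0 y x t | y in @nonneg_half R].
Definition Gmin (R : realType) (ub rhob : R -> R) (x t : R) : R :=
  inf [set Gtxt ub rhob tau x t | tau in @nonneg_half R].

Definition Fargmin (R : realType) (u0 rho0 : R -> R) (x t : R) : set R :=
  [set y | 0 <= y /\ Fyxt u0 rho0 y x t = Fmin u0 rho0 x t].
Definition Gargmin (R : realType) (ub rhob : R -> R) (x t : R) : set R :=
  [set tau | 0 <= tau /\ Gtxt ub rhob tau x t = Gmin ub rhob x t].
Definition y_low (R : realType) (u0 rho0 : R -> R) (x t : R) : R :=
  inf (Fargmin u0 rho0 x t).
Definition y_up (R : realType) (u0 rho0 : R -> R) (x t : R) : R :=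
  sup (Fargmin u0 rho0 x t).
Definition tau_low (R : realType) (ub rhob : R -> R) (x t : R) : R :=
  inf (Gargmin ub rhob x t).
Definition tau_up (R : realType) (ub rhob : R -> R) (x t : R) : R :=
  sup (Gargmin ub rhob x t).

Definition hull3 (R : realType) (a b c : R * R) : set (R * R) :=
  [set p | exists l1 l2 l3 : R,
     [/\ 0 <= l1, 0 <= l2, 0 <= l3, l1 + l2 + l3 = 1 &
         p = (l1 * a.1 + l2 * b.1 + l3 * c.1, l1 * a.2 + l2 * b.2 + l3 * c.2)]].
Definition hull4 (R : realType) (a b c d : R * R) : set (R * R) :=
  [set p | exists l1 l2 l3 l4 : R,
     [/\ 0 <= l1, 0 <= l2, 0 <= l3, 0 <= l4 /\ l1 + l2 + l3 + l4 = 1 &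
         p = (l1 * a.1 + l2 * b.1 + l3 * c.1 + l4 * d.1,
              l1 * a.2 + l2 * b.2 + l3 * c.2 + l4 * d.2)]].

(* characteristic triangle Delta(x,t), meaningful for x >= 0, t > 0 *)
Definition char_triangle (R : realType) (u0 ub rho0 rhob : R -> R) (x t : R)
  : set (R * R) :=
  let F := Fmin u0 rho0 x t in
  let G := Gmin ub rhob x t in
  if (0 < x) && (F < G) then
    hull3 (x, t) (y_low u0 rho0 x t, 0) (y_up u0 rho0 x t, 0)
  else if G < F then
    hull3 (x, t) (0, tau_low ub rhob x t) (0, tau_up ub rhob x t)
  else if F == G then
    hull4 (x, t) (y_up u0 rho0 x t, 0) (0, tau_up ub rhob x t) (0, 0)
  else                                          (* case (4): x = 0, F < G *)
    hull3 (0, t) (0, 0) (y_up u0 rho0 x t, 0).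

(* Put Y := y^*(0,t).  The x-dependence of both functionals is affine:
   F(y,x,t) = F(y,0,t) - x \int_0^y rho0 and G(tau,x,t) = G(tau,0,t) + x W(tau)
   with W(tau) = \int_0^tau rhob ub strictly increasing from W(0) = 0.  Hence
   F(x1,t) <= F(0,t).  The integrand of G(.,0,t) has the sign of tau - t, so
   G(.,0,t) is minimal at tau = t and nowhere beyond; thus tau^*(0,t) <= t and,
   as W > 0 away from 0, G(x1,t) > G(0,t).  A point of Delta(0,t) with positive
   abscissa forces F(0,t) <= G(0,t), so F(x1,t) < G(x1,t) and Delta(x1,t) is
   of type (1).  Subtracting x1 times a strictly increasing function from
   F(.,0,t) can only move its minimizers to the right, so
   Y <= y_*(x1,t) <= y^*(x1,t).  The line through (0,t) and (Y,0) then
   separates the triangles: Delta(0,t) lies in t p.1 + Y p.2 <= t Y, while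
   Delta(x1,t) minus its base lies in t p.1 + Y p.2 > t Y. *)

From HB Require Import structures.
From mathcomp Require Import all_boot all_order all_algebra.
From mathcomp Require Import all_classical all_reals all_analysis.
From mathcomp Require Import ring lra.
Import Order.TTheory GRing.Theory Num.Theory.
Local Open Scope classical_set_scope.
Local Open Scope ring_scope.

Section ConvexHull.
Context {R : realType}.
Implicit Types (a b c d p : R * R) (alpha beta M : R).

Lemma hull3_affine_le {alpha beta M a b c p} :
  hull3 a b c p ->
  alpha * a.1 + beta * a.2 <= M -> alpha * b.1 + beta * b.2 <= M ->
  alpha * c.1 + beta * c.2 <= M -> alpha * p.1 + beta * p.2 <= M.
Proof.
move=> [l1 [l2 [l3 [l1_ge0 l2_ge0 l3_ge0 l_sum ->]]]] ha hb hc /=.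
have -> : M = l1 * M + l2 * M + l3 * M by rewrite -!mulrDl l_sum mul1r.
set fa := alpha * a.1 + _ in ha; set fb := alpha * b.1 + _ in hb.
set fc := alpha * c.1 + _ in hc.
have -> : alpha * (l1 * a.1 + l2 * b.1 + l3 * c.1) +
          beta * (l1 * a.2 + l2 * b.2 + l3 * c.2) = l1 * fa + l2 * fb + l3 * fc.
  by rewrite /fa /fb /fc; ring.
by rewrite !lerD // ler_wpM2l.
Qed.

Lemma hull3_affine_ge {alpha beta M a b c p} :
  hull3 a b c p ->
  M <= alpha * a.1 + beta * a.2 -> M <= alpha * b.1 + beta * b.2 ->
  M <= alpha * c.1 + beta * c.2 -> M <= alpha * p.1 + beta * p.2.
Proof.
move=> /(@hull3_affine_le (- alpha) (- beta) (- M)).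
by rewrite !mulNr -!opprD !lerN2.
Qed.

Lemma hull4_affine_le {alpha beta M a b c d p} :
  hull4 a b c d p ->
  alpha * a.1 + beta * a.2 <= M -> alpha * b.1 + beta * b.2 <= M ->
  alpha * c.1 + beta * c.2 <= M -> alpha * d.1 + beta * d.2 <= M ->
  alpha * p.1 + beta * p.2 <= M.
Proof.
move=> [l1 [l2 [l3 [l4 [l1_ge0 l2_ge0 l3_ge0 [l4_ge0 l_sum] ->]]]]] ha hb hc hd /=.
have -> : M = l1 * M + l2 * M + l3 * M + l4 * M by rewrite -!mulrDl l_sum mul1r.
set fa := alpha * a.1 + _ in ha; set fb := alpha * b.1 + _ in hb.
set fc := alpha * c.1 + _ in hc; set fd := alpha * d.1 + _ in hd.
have -> : alpha * (l1 * a.1 + l2 * b.1 + l3 * c.1 + l4 * d.1) +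
          beta * (l1 * a.2 + l2 * b.2 + l3 * c.2 + l4 * d.2) =
          l1 * fa + l2 * fb + l3 * fc + l4 * fd.
  by rewrite /fa /fb /fc /fd; ring.
by rewrite !lerD // ler_wpM2l.
Qed.

End ConvexHull.

Section CharTriangle.
Context {R : realType} {u0 ub rho0 rhob : R -> R}.

Lemma char_triangle_interior (x t : R) :
  0 < x -> Fmin u0 rho0 x t < Gmin ub rhob x t ->
  char_triangle u0 ub rho0 rhob x t =
  hull3 (x, t) (y_low u0 rho0 x t, 0) (y_up u0 rho0 x t, 0).
Proof. by move=> x_gt0 FG; rewrite /char_triangle x_gt0 FG. Qed.

Lemma char_triangle_origin {t : R} {p : R * R} :
  char_triangle u0 ub rho0 rhob 0 t p -> 0 < p.1 ->
  Fmin u0 rho0 0 t <= Gmin ub rhob 0 t /\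
  (hull4 (0, t) (y_up u0 rho0 0 t, 0) (0, tau_up ub rhob 0 t) (0, 0) p \/
   hull3 (0, t) (0, 0) (y_up u0 rho0 0 t, 0) p).
Proof.
rewrite /char_triangle ltxx /=; case: ltP => [_ | FG].
  by case=> [l1 [l2 [l3 [_ _ _ _ ->]]]]; rewrite /= !mulr0 !addr0 ltxx.
by case: ifP => _ hp _; split=> //; [left | right].
Qed.

Lemma origin_triangle_below {t Y T : R} {p : R * R} :
  0 < t -> 0 <= Y -> T <= t ->
  hull4 (0, t) (Y, 0) (0, T) (0, 0) p \/ hull3 (0, t) (0, 0) (Y, 0) p ->
  t * p.1 + Y * p.2 <= t * Y.
Proof.
move=> t_gt0 Y_ge0 T_le_t.
have tY_ge0 : 0 <= t * Y by rewrite mulr_ge0 // ltW.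
case=> hp; [apply: (hull4_affine_le hp) | apply: (hull3_affine_le hp)] => /=; nra.
Qed.

Lemma interior_triangle_above {t x Y a b : R} {p : R * R} :
  0 <= t -> 0 < x -> Y <= a -> Y <= b -> 0 < p.2 ->
  hull3 (x, t) (a, 0) (b, 0) p -> t * Y < t * p.1 + Y * p.2.
Proof.
move=> t_ge0 x_gt0 Ya Yb p2_gt0 hp.
have at_apex : t * Y <= t * x + (Y - x) * t by rewrite mulrBl; lra.
have at_a : t * Y <= t * a + (Y - x) * 0 by rewrite mulr0 addr0 ler_wpM2l.
have at_b : t * Y <= t * b + (Y - x) * 0 by rewrite mulr0 addr0 ler_wpM2l.
have := hull3_affine_ge hp at_apex at_a at_b.
have := mulr_gt0 x_gt0 p2_gt0; rewrite mulrBl; lra.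
Qed.

End CharTriangle.

Section HalflineMinimizers.
Context {R : realType}.
Implicit Types (f g P : R -> R) (c y : R).

Definition halfline_minimizer f y : Prop :=
  0 <= y /\ forall z, 0 <= z -> f y <= f z.

Lemma le_inf_halfline f c : (forall z, 0 <= z -> c <= f z) ->
  c <= inf [set f z | z in @nonneg_half R].
Proof.
move=> cf; apply: lb_le_inf; first by exists (f 0), 0; rewrite /nonneg_half /=.
by move=> _ [z z_ge0 <-]; apply: cf.
Qed.

Lemma halfline_minimizer_inf {f y} : halfline_minimizer f y ->
  inf [set f z | z in @nonneg_half R] = f y.
Proof.
move=> [y_ge0 fy_min]; apply/le_anti; rewrite le_inf_halfline // andbT.
by apply: ge_inf; [exists (f y) => _ [z z_ge0 <-]; apply: fy_min | exists y].
Qed.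

Lemma halfline_argminP {f} {y0 : R} (y : R) : halfline_minimizer f y0 ->
  (0 <= y /\ f y = inf [set f z | z in @nonneg_half R]) <-> halfline_minimizer f y.
Proof.
move=> /[dup] /halfline_minimizer_inf -> [y0_ge0 fy0_min].
split=> [[y_ge0 fy_eq] | [y_ge0 fy_min]]; split=> //.
  by move=> z /fy0_min; rewrite fy_eq.
by apply/le_anti; rewrite fy_min ?fy0_min.
Qed.

Lemma halfline_minimizer_mono {f g P c} {y0 y1 : R} : 0 < c ->
  (forall a b, 0 <= a -> a < b -> P a < P b) ->
  (forall y, 0 <= y -> g y = f y - c * P y) ->
  halfline_minimizer f y0 -> halfline_minimizer g y1 -> y0 <= y1.
Proof.
move=> c_gt0 P_incr gE [y0_ge0 f_min] [y1_ge0 g_min].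
rewrite leNgt; apply/negP => y10.
have := g_min _ y0_ge0; have := f_min _ y1_ge0; rewrite !gE //.
have : c * P y1 < c * P y0 by rewrite ltr_pM2l // P_incr.
lra.
Qed.

End HalflineMinimizers.

Section HalflineIntegrals.
Context {R : realType}.
Local Notation mu := (@lebesgue_measure R).
Local Notation Phi g y := (parameterized_integral mu 0 y g).

Lemma Rintegral_oc_gt0 (g : R -> R) (a b : R) : a < b ->
  mu.-integrable `]a, b] (EFin \o g) ->
  (forall x, a < x <= b -> 0 <= g x) -> (forall x, a < x < b -> 0 < g x) ->
  0 < \int[mu]_(x in `]a, b]) g x.
Proof.
move=> ab intg g_ge0 g_gt0.
rewrite lt_neqAle Rintegral_ge0 ?andbT => [|x]; last by rewrite /= in_itv; apply: g_ge0.
apply/eqP; rewrite /Rintegral => int0.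
have intE : (\int[mu]_(x in `]a, b]) (EFin \o g) x = 0)%E.
  by rewrite -[LHS]fineK ?integrable_fin_num // -int0.
have [mg _] := integrableP _ _ _ intg.
have : (\int[mu]_(x in `]a, b]) `|(EFin \o g) x| = 0)%E.
  rewrite -intE; apply: eq_integral => x; rewrite inE /= in_itv /= => xab.
  by rewrite ger0_norm // g_ge0.
case/(ae_eq_integral_abs mu (measurable_itv _) mg) => N [mN N0 gN].
have : (mu `]a, b[ <= mu N)%E.
  apply: le_measure; rewrite ?inE // => x; rewrite /= in_itv /= => /andP[ax xb].
  apply: gN => /= g0.
  have /g0 : [set` `]a, b]] x by rewrite /= in_itv /= ax ltW.
  by move/eqP; rewrite eqe gt_eqF // g_gt0 ?ax.
by rewrite N0 lebesgue_measure_itv /= lte_fin ab -EFinD lee_fin subr_le0 leNgt ab.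
Qed.

Lemma measurable_nonneg_half : measurable (@nonneg_half R).
Proof.
have -> : @nonneg_half R = `[0, +oo[%classic.
  by apply/seteqP; split => x; rewrite /nonneg_half /= in_itv /= andbT.
exact: measurable_itv.
Qed.

Definition locally_bounded_measurable (g : R -> R) : Prop :=
  measurable_fun (@nonneg_half R) g /\ locally_bounded_on_halfline g.

Lemma bounded_locally_bounded_measurable (g : R -> R) :
  measurable_fun (@nonneg_half R) g -> bounded_on_halfline g ->
  locally_bounded_measurable g.
Proof. by move=> mg [M gM]; split=> // a _; exists M => x /andP[x_ge0 _]; apply: gM. Qed.

Lemma locally_bounded_measurable_cst (c : R) :
  locally_bounded_measurable (fun=> c).
Proof. by split=> [|a _]; [exact: measurable_cst | exists `|c|]. Qed.

Lemma locally_bounded_measurable_id : locally_bounded_measurable id.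
Proof.
split=> [|a _]; first exact: measurable_id.
by exists a => x /andP[x_ge0 xa]; rewrite ger0_norm.
Qed.

Lemma locally_bounded_measurableD {f g : R -> R} :
  locally_bounded_measurable f -> locally_bounded_measurable g ->
  locally_bounded_measurable (fun x => f x + g x).
Proof.
move=> [mf bf] [mg bg]; split=> [|a a_ge0]; first exact: measurable_realfun.measurable_funD.
have [[M fM] [N gN]] := (bf a a_ge0, bg a a_ge0).
by exists (M + N) => x xa; rewrite (le_trans (ler_normD _ _)) // lerD ?fM ?gN.
Qed.

Lemma locally_bounded_measurableM {f g : R -> R} :
  locally_bounded_measurable f -> locally_bounded_measurable g ->
  locally_bounded_measurable (fun x => f x * g x).
Proof.
move=> [mf bf] [mg bg]; split=> [|a a_ge0]; first exact: measurable_realfun.measurable_funM.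
have [[M fM] [N gN]] := (bf a a_ge0, bg a a_ge0).
by exists (M * N) => x xa; rewrite normrM ler_pM ?fM ?gN.
Qed.

Lemma locally_bounded_measurableN {g : R -> R} :
  locally_bounded_measurable g -> locally_bounded_measurable (fun x => - g x).
Proof.
move=> lbm_g; have -> : (fun x => - g x) = (fun x => -1 * g x).
  by apply/funext => x; rewrite mulN1r.
exact: locally_bounded_measurableM (locally_bounded_measurable_cst _) lbm_g.
Qed.

Lemma locally_bounded_measurable_integrable (g : R -> R) (a b : R) :
  locally_bounded_measurable g -> 0 <= a ->
  mu.-integrable `[a, b] (EFin \o g).
Proof.
move=> [mg bg] a_ge0; apply: measurable_bounded_integrable.
- exact: measurable_itv.
- by have := lebesgue_measure_itv `[a, b]; rewrite /= => ->; case: ifP => _; rewrite ?ltry.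
- apply: measurable_funS mg; first exact: measurable_nonneg_half.
  by move=> x; rewrite /= in_itv /= => /andP[/(le_trans a_ge0)].
- have [M gM] : exists M, forall x, 0 <= x <= Num.max a b -> `|g x| <= M.
    by apply: bg; rewrite le_max a_ge0.
  exists M; split=> [|N MN x]; first exact: num_real.
  rewrite /= in_itv /= => /andP[ax xb]; apply: le_trans (ltW MN); apply: gM.
  by rewrite (le_trans a_ge0 ax) le_max xb orbT.
Qed.

Lemma locally_bounded_measurable_integrable_oc (g : R -> R) (a b : R) :
  locally_bounded_measurable g -> 0 <= a ->
  mu.-integrable `]a, b] (EFin \o g).
Proof.
move=> lbm_g a_ge0.
apply: (integrableS _ _ _ (locally_bounded_measurable_integrable _ _ b lbm_g a_ge0));
  [exact: measurable_itv | exact: measurable_itv |].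
by apply: subset_itv; rewrite bnd_simp.
Qed.

Lemma Phi0 (g : R -> R) : Phi g 0 = 0.
Proof. by rewrite /parameterized_integral set_itv1 Rintegral_set1. Qed.

Lemma Phi_ge0 (g : R -> R) (y : R) : (forall x, 0 <= x -> 0 <= g x) ->
  0 <= Phi g y.
Proof. by move=> g_ge0; apply: Rintegral_ge0 => x; rewrite /= in_itv => /andP[/g_ge0]. Qed.

Lemma PhiB (g : R -> R) (a b : R) : locally_bounded_measurable g ->
  0 <= a -> a <= b -> Phi g b - Phi g a = \int[mu]_(x in `]a, b]) g x.
Proof.
move=> lbm_g a_ge0 ab; apply: (Rintegral_itvB (a := BLeft 0) (b := BRight b)).
- exact: locally_bounded_measurable_integrable.
- by rewrite bnd_simp.
- by rewrite bnd_simp.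
Qed.

Lemma PhiD (f g : R -> R) (y : R) :
  locally_bounded_measurable f -> locally_bounded_measurable g -> 0 <= y ->
  Phi (fun x => f x + g x) y = Phi f y + Phi g y.
Proof.
move=> lbm_f lbm_g y_ge0; apply: RintegralD; first exact: measurable_itv.
- exact: locally_bounded_measurable_integrable.
- exact: locally_bounded_measurable_integrable.
Qed.

Lemma PhiZ (c : R) (g : R -> R) (y : R) : locally_bounded_measurable g ->
  0 <= y -> Phi (fun x => c * g x) y = c * Phi g y.
Proof.
move=> lbm_g y_ge0; apply: RintegralZl; first exact: measurable_itv.
exact: locally_bounded_measurable_integrable.
Qed.

Lemma ge0_Phi_le {g : R -> R} {a b : R} : locally_bounded_measurable g ->
  0 <= a -> a <= b -> (forall x, a < x <= b -> 0 <= g x) -> Phi g a <= Phi g b.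
Proof.
move=> lbm_g a_ge0 ab g_ge0; rewrite -subr_ge0 PhiB //.
by apply: Rintegral_ge0 => x; rewrite /= in_itv; apply: g_ge0.
Qed.

Lemma gt0_Phi_lt {g : R -> R} {a b : R} : locally_bounded_measurable g ->
  0 <= a -> a < b -> (forall x, a < x <= b -> 0 <= g x) ->
  (forall x, a < x < b -> 0 < g x) -> Phi g a < Phi g b.
Proof.
move=> lbm_g a_ge0 ab g_ge0 g_gt0; rewrite -subr_gt0 PhiB ?(ltW ab) //.
by apply: Rintegral_oc_gt0 => //; exact: locally_bounded_measurable_integrable_oc.
Qed.

Lemma le0_Phi_ge {g : R -> R} {a b : R} : locally_bounded_measurable g ->
  0 <= a -> a <= b -> (forall x, a < x <= b -> g x <= 0) -> Phi g b <= Phi g a.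
Proof.
move=> lbm_g a_ge0 ab g_le0.
have lbm_Ng := locally_bounded_measurableM (locally_bounded_measurable_cst (-1)) lbm_g.
have := ge0_Phi_le lbm_Ng a_ge0 ab; rewrite !PhiZ ?(le_trans a_ge0) // !mulN1r lerN2.
by apply=> x /g_le0; rewrite mulN1r oppr_ge0.
Qed.

Lemma lt0_Phi_gt {g : R -> R} {a b : R} : locally_bounded_measurable g ->
  0 <= a -> a < b -> (forall x, a < x <= b -> g x <= 0) ->
  (forall x, a < x < b -> g x < 0) -> Phi g b < Phi g a.
Proof.
move=> lbm_g a_ge0 ab g_le0 g_lt0.
have lbm_Ng := locally_bounded_measurableM (locally_bounded_measurable_cst (-1)) lbm_g.
have := gt0_Phi_lt lbm_Ng a_ge0 ab; rewrite !PhiZ ?(le_trans a_ge0 (ltW ab)) // !mulN1r ltrN2.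
by apply=> x; rewrite mulN1r ?oppr_ge0 ?oppr_gt0; [apply: g_le0 | apply: g_lt0].
Qed.

Lemma Phi_minimizer_le {g : R -> R} {K y : R} : locally_bounded_measurable g ->
  0 <= K -> (forall x, K < x -> 0 < g x) ->
  halfline_minimizer (fun y => Phi g y) y -> y <= K.
Proof.
move=> lbm_g K_ge0 g_gt0 [_ y_min]; rewrite leNgt; apply/negP => Ky.
have := y_min K K_ge0; rewrite leNgt => /negP; apply.
by apply: gt0_Phi_lt => // x /andP[Kx _]; [apply/ltW | ]; apply: g_gt0.
Qed.

Lemma Phi_minimizer_exists {g : R -> R} {K : R} : locally_bounded_measurable g ->
  0 <= K -> (forall x, K < x -> 0 <= g x) ->
  exists y, halfline_minimizer (fun y => Phi g y) y.
Proof.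
move=> lbm_g K_ge0 g_ge0.
have [y] := EVT_min K_ge0 (parameterized_integral_continuous K_ge0
  (locally_bounded_measurable_integrable _ _ K lbm_g (lexx 0))).
rewrite in_itv /= => /andP[y_ge0 yK] y_min; exists y; split=> // z z_ge0.
have [zK | Kz] := leP z K; first by apply: y_min; rewrite in_itv /= z_ge0.
apply: le_trans (y_min K _) _; first by rewrite in_itv /= K_ge0 lexx.
by apply: ge0_Phi_le (ltW Kz) _ => // x /andP[Kx _]; apply: g_ge0.
Qed.

End HalflineIntegrals.

Section Characteristics.
Context {R : realType} {u0 ub rho0 rhob : R -> R}.
Hypothesis data : standing_assumptions u0 ub rho0 rhob.
Context {t : R} (t_gt0 : 0 < t).
Local Notation mu := (@lebesgue_measure R).
Local Notation Phi g y := (parameterized_integral mu 0 y g).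
Local Notation lbm := locally_bounded_measurable.

Let lbm_u0 : lbm u0.
Proof. by case: data => [[mu0 bu0] _ _ _]; exact: bounded_locally_bounded_measurable. Qed.
Let lbm_ub : lbm ub.
Proof. by case: data => [_ [mub [bub _]] _ _]; exact: bounded_locally_bounded_measurable. Qed.
Let lbm_rho0 : lbm rho0.
Proof. by case: data => [_ _ [mrho0 [lbrho0 _]] _]. Qed.
Let lbm_rhob : lbm rhob.
Proof. by case: data => [_ _ _ [mrhob [lbrhob _]]]. Qed.
Let ub_gt0 x : 0 <= x -> 0 < ub x.
Proof. by case: data => [_ [_ [_ ub_gt0]] _ _]; apply: ub_gt0. Qed.
Let rho0_gt0 x : 0 <= x -> 0 < rho0 x.
Proof. by case: data => [_ _ [_ [_ rho0_gt0]] _]; apply: rho0_gt0. Qed.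
Let rhob_gt0 x : 0 <= x -> 0 < rhob x.
Proof. by case: data => [_ _ _ [_ [_ rhob_gt0]]]; apply: rhob_gt0. Qed.

Let gF x e := (t * u0 e + e - x) * rho0 e.
Let gG x e := (x - ub e * (t - e)) * rhob e * ub e.
Let w e := rhob e * ub e.

Let lbm_gF x : lbm (gF x).
Proof.
apply: locally_bounded_measurableM lbm_rho0.
apply: locally_bounded_measurableD (locally_bounded_measurable_cst _).
apply: locally_bounded_measurableD locally_bounded_measurable_id.
exact: locally_bounded_measurableM (locally_bounded_measurable_cst _) lbm_u0.
Qed.

Let lbm_w : lbm w.
Proof. exact: locally_bounded_measurableM. Qed.

Let lbm_gG x : lbm (gG x).
Proof.
apply: locally_bounded_measurableM lbm_ub; apply: locally_bounded_measurableM lbm_rhob.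
apply: locally_bounded_measurableD (locally_bounded_measurable_cst _) _.
apply/locally_bounded_measurableN/locally_bounded_measurableM => //.
apply: locally_bounded_measurableD (locally_bounded_measurable_cst _) _.
exact/locally_bounded_measurableN/locally_bounded_measurable_id.
Qed.

Lemma Fyxt_shift x y : 0 <= y ->
  Fyxt u0 rho0 y x t = Fyxt u0 rho0 y 0 t - x * Phi rho0 y.
Proof.
move=> y_ge0; have -> : Fyxt u0 rho0 y x t = Phi (fun e => gF 0 e + - x * rho0 e) y.
  by apply: eq_Rintegral => e _; rewrite /gF; ring.
by rewrite PhiD ?PhiZ ?mulNr //;
  exact: locally_bounded_measurableM (locally_bounded_measurable_cst _) lbm_rho0.
Qed.

Lemma Gtxt_shift x tau : 0 <= tau ->
  Gtxt ub rhob tau x t = Gtxt ub rhob tau 0 t + x * Phi w tau.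
Proof.
move=> tau_ge0; have -> : Gtxt ub rhob tau x t = Phi (fun e => gG 0 e + x * w e) tau.
  by apply: eq_Rintegral => e _; rewrite /gG /w; ring.
by rewrite PhiD ?PhiZ //;
  exact: locally_bounded_measurableM (locally_bounded_measurable_cst _) lbm_w.
Qed.

Let gF_coercive x : exists2 K, 0 <= K & forall e, K < e -> 0 < gF x e.
Proof.
case: data => [[_ [M u0M]] _ _ _].
have M_ge0 : 0 <= M by apply: le_trans (u0M 0 (lexx 0)).
exists (`|x| + t * M) => [|e Ke]; first by rewrite addr_ge0 // mulr_ge0 // ltW.
have e_ge0 : 0 <= e by apply/ltW/(le_lt_trans _ Ke)/addr_ge0/mulr_ge0/M_ge0/ltW.
rewrite /gF mulr_gt0 ?rho0_gt0 //.
have /andP[u0_lo _] : - M <= u0 e <= M by rewrite -ler_norml u0M.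
have := ler_wpM2l (ltW t_gt0) u0_lo; have := ler_norm x; lra.
Qed.

Lemma Fyxt_minimizer_exists x :
  exists y, halfline_minimizer (fun y => Fyxt u0 rho0 y x t) y.
Proof.
have [K K_ge0 gF_gt0] := gF_coercive x.
have [|y y_min] := Phi_minimizer_exists (lbm_gF x) K_ge0; last by exists y.
by move=> e /gF_gt0/ltW.
Qed.

Lemma FargminP x y :
  Fargmin u0 rho0 x t y <-> halfline_minimizer (fun y => Fyxt u0 rho0 y x t) y.
Proof. by have [y0 /(halfline_argminP y)] := Fyxt_minimizer_exists x. Qed.

Lemma Fargmin_nonempty x : Fargmin u0 rho0 x t !=set0.
Proof. by have [y /FargminP] := Fyxt_minimizer_exists x; exists y. Qed.

Lemma Fargmin_bounded x : exists K, forall y, Fargmin u0 rho0 x t y -> y <= K.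
Proof.
have [K K_ge0 gF_gt0] := gF_coercive x.
by exists K => y /FargminP; apply: Phi_minimizer_le (lbm_gF x) K_ge0 gF_gt0.
Qed.

Lemma Fmin_le {x1} : 0 <= x1 -> Fmin u0 rho0 x1 t <= Fmin u0 rho0 0 t.
Proof.
move=> x1_ge0; have [y1 y1_min] := Fyxt_minimizer_exists x1.
rewrite /Fmin (halfline_minimizer_inf y1_min); apply: le_inf_halfline => z z_ge0.
apply: le_trans (y1_min.2 z z_ge0) _; rewrite (Fyxt_shift x1) // lerBlDr lerDl.
by rewrite mulr_ge0 // Phi_ge0 // => e /rho0_gt0/ltW.
Qed.

Lemma Fargmin_mono {x1 y0 y1} : 0 < x1 ->
  Fargmin u0 rho0 0 t y0 -> Fargmin u0 rho0 x1 t y1 -> y0 <= y1.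
Proof.
move=> x1_gt0 /FargminP y0_min /FargminP y1_min.
apply: (halfline_minimizer_mono x1_gt0 _ (Fyxt_shift x1) y0_min y1_min).
move=> a b a_ge0 ab; apply: gt0_Phi_lt => // e /andP[ae _];
  [apply: ltW | ]; apply/rho0_gt0/(le_trans a_ge0)/ltW/ae.
Qed.

Lemma y_up_origin {x1} : 0 < x1 ->
  [/\ 0 <= y_up u0 rho0 0 t, y_up u0 rho0 0 t <= y_low u0 rho0 x1 t &
      y_up u0 rho0 0 t <= y_up u0 rho0 x1 t].
Proof.
move=> x1_gt0.
have [[y0 y0_min] [y1 y1_min]] :=
  (Fargmin_nonempty 0, Fargmin_nonempty x1).
have [[K0 K0_ub] [K1 K1_ub]] := (Fargmin_bounded 0, Fargmin_bounded x1).
have below_argmin1 y : Fargmin u0 rho0 x1 t y -> y_up u0 rho0 0 t <= y.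
  move=> y_argmin1; apply: ge_sup => [|z z_argmin0]; first by exists y0.
  exact: Fargmin_mono x1_gt0 z_argmin0 y_argmin1.
split.
- by apply: le_trans y0_min.1 (ub_le_sup _ y0_min); exists K0.
- by apply: lb_le_inf; [exists y1 | exact: below_argmin1].
- by apply: le_trans (below_argmin1 _ y1_min) (ub_le_sup _ y1_min); exists K1.
Qed.

Let gG0E e : gG 0 e = ub e * rhob e * ub e * (e - t).
Proof. by rewrite /gG; ring. Qed.

Let gG0_weight_gt0 e : 0 <= e -> 0 < ub e * rhob e * ub e.
Proof. by move=> e_ge0; rewrite !mulr_gt0 ?ub_gt0 ?rhob_gt0. Qed.

Let w_gt0 e : 0 <= e -> 0 < w e.
Proof. by move=> e_ge0; rewrite mulr_gt0 ?ub_gt0 ?rhob_gt0. Qed.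

Let t2_gt0 : 0 < t / 2. Proof. by rewrite divr_gt0. Qed.
Let t2_lt_t : t / 2 < t. Proof. by have := t_gt0; lra. Qed.

Lemma Gtxt_origin_nonincr {a b} : 0 <= a -> a <= b -> b <= t ->
  Gtxt ub rhob b 0 t <= Gtxt ub rhob a 0 t.
Proof.
move=> a_ge0 ab bt; apply: (le0_Phi_ge (lbm_gG 0) a_ge0 ab) => e /andP[ae eb].
have e_ge0 : 0 <= e by apply/(le_trans a_ge0)/ltW.
by rewrite gG0E pmulr_rle0 ?subr_le0 ?gG0_weight_gt0 ?(le_trans eb).
Qed.

Lemma Gtxt_origin_minimizer : halfline_minimizer (fun tau => Gtxt ub rhob tau 0 t) t.
Proof.
split=> [|tau tau_ge0]; first exact: ltW.
have [tau_le_t | t_lt_tau] := leP tau t; first exact: Gtxt_origin_nonincr tau_ge0 tau_le_t (lexx t).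
apply: (ge0_Phi_le (lbm_gG 0) (ltW t_gt0) (ltW t_lt_tau)) => e /andP[t_lt_e _].
by rewrite gG0E pmulr_rge0 ?subr_ge0 ?ltW // gG0_weight_gt0 // ltW ?(lt_trans t_gt0).
Qed.

Lemma tau_up_origin_le : tau_up ub rhob 0 t <= t.
Proof.
have argminP y := halfline_argminP y Gtxt_origin_minimizer.
apply: ge_sup => [|tau /argminP]; first by exists t; apply/argminP/Gtxt_origin_minimizer.
apply: Phi_minimizer_le (lbm_gG 0) (ltW t_gt0) _ => e t_lt_e.
by rewrite gG0E pmulr_rgt0 ?subr_gt0 // gG0_weight_gt0 // ltW ?(lt_trans t_gt0).
Qed.

Let Gtxt_origin_half_gt : Gtxt ub rhob t 0 t < Gtxt ub rhob (t / 2) 0 t.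
Proof.
apply: (lt0_Phi_gt (lbm_gG 0) (ltW t2_gt0) t2_lt_t) => e /andP[t2_lt_e e_t];
  have e_ge0 : 0 <= e by apply/ltW/(lt_trans t2_gt0).
- by rewrite gG0E pmulr_rle0 ?subr_le0 ?gG0_weight_gt0.
- by rewrite gG0E pmulr_rlt0 ?subr_lt0 ?gG0_weight_gt0.
Qed.

Let Phi_w_half_gt0 : 0 < Phi w (t / 2).
Proof.
rewrite -[X in X < _](Phi0 w); apply: (gt0_Phi_lt lbm_w (lexx 0) t2_gt0).
- by move=> e /andP[e_gt0 _]; apply/ltW/w_gt0/ltW.
- by move=> e /andP[e_gt0 _]; apply/w_gt0/ltW.
Qed.

Let Phi_w_nondecr {a b} : 0 <= a -> a <= b -> Phi w a <= Phi w b.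
Proof.
move=> a_ge0 ab; apply: (ge0_Phi_le lbm_w a_ge0 ab) => e /andP[ae _].
exact/ltW/w_gt0/(le_trans a_ge0)/ltW.
Qed.

Lemma Gmin_origin_lt {x1} : 0 < x1 -> Gmin ub rhob 0 t < Gmin ub rhob x1 t.
Proof.
move=> x1_gt0.
pose delta := Num.min (x1 * Phi w (t / 2))
                      (Gtxt ub rhob (t / 2) 0 t - Gtxt ub rhob t 0 t).
have delta_gt0 : 0 < delta by rewrite lt_min mulr_gt0 ?subr_gt0.
have [delta_W delta_G0] : delta <= x1 * Phi w (t / 2) /\
    delta <= Gtxt ub rhob (t / 2) 0 t - Gtxt ub rhob t 0 t.
  by split; rewrite ge_min lexx ?orbT.
rewrite /Gmin (halfline_minimizer_inf Gtxt_origin_minimizer).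
apply: (lt_le_trans (_ : _ < Gtxt ub rhob t 0 t + delta)); first by rewrite ltrDl.
(* Up to t / 2 the term Gtxt tau 0 t is at least delta above its minimum;
   beyond t / 2 the term x1 * Phi w tau is at least delta. *)
apply: le_inf_halfline => tau tau_ge0; rewrite (Gtxt_shift x1) //.
have := Gtxt_origin_minimizer.2 tau tau_ge0; rewrite /=.
have [tau_le_t2 | t2_lt_tau] := leP tau (t / 2).
  have := Gtxt_origin_nonincr tau_ge0 tau_le_t2 (ltW t2_lt_t).
  have := Phi_w_nondecr (lexx 0) tau_ge0; rewrite Phi0 => W_ge0.
  have := mulr_ge0 (ltW x1_gt0) W_ge0; lra.
have := ler_wpM2l (ltW x1_gt0) (Phi_w_nondecr (ltW t2_gt0) (ltW t2_lt_tau)).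
lra.
Qed.

End Characteristics.

Theorem lemma2p10 (R : realType) (u0 ub rho0 rhob : R -> R) :
  standing_assumptions u0 ub rho0 rhob ->
  forall t x1 : R, 0 < t -> 0 < x1 ->
  forall p : R * R,
    char_triangle u0 ub rho0 rhob 0 t p ->
    char_triangle u0 ub rho0 rhob x1 t p ->
    ~ (0 < p.1 /\ 0 < p.2).
Proof.
move=> data t x1 t_gt0 x1_gt0 p Delta0 Delta1 [p1_gt0 p2_gt0].
have [FG0 hull0] := char_triangle_origin Delta0 p1_gt0.
have FG1 : Fmin u0 rho0 x1 t < Gmin ub rhob x1 t.
  apply: le_lt_trans (Fmin_le data t_gt0 (ltW x1_gt0)) _.
  exact: le_lt_trans FG0 (Gmin_origin_lt data t_gt0 x1_gt0).
rewrite char_triangle_interior // in Delta1.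
have [Y_ge0 Y_le_low Y_le_up] := y_up_origin data t_gt0 x1_gt0.
have := origin_triangle_below t_gt0 Y_ge0 (tau_up_origin_le data t_gt0) hull0.
have := interior_triangle_above (ltW t_gt0) x1_gt0 Y_le_low Y_le_up p2_gt0 Delta1.
lra.
Qed.
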